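(* There exists $c>0$ such that for every positive integer $t$ there is $\alpha=\alpha(t)>0$ with the following property: every quasi-comparability graph of complexity $t$ on $n$ vertices contains a clique or an independent set of size at least $\alpha n^{c}$.
   Context: For $\mathbf{x},\mathbf{y}\in\mathbb{R}^t$ write $\mathbf{x}\prec\mathbf{y}$ if $\mathbf{x}(i)<\mathbf{y}(i)$ for every $i\in[t]$. A quasi-comparability graph of complexity $t$ is a finite simple graph $G$ with $V(G)\subset\mathbb{R}^t\times\mathbb{R}^t$ in which distinct vertices $(\mathbf{x},\mathbf{y})$ and $(\mathbf{x}',\mathbf{y}')$ are adjacent iff $\mathbf{x}\prec\mathbf{y}'$ or $\mathbf{x}'\prec\mathbf{y}$. *)

From HB Require Import structures.
From mathcomp Require Import all_boot all_order all_algebra.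
From mathcomp Require Import all_classical all_reals all_analysis.
From mathcomp Require Import Rstruct Rstruct_topology.
Set Implicit Arguments. Unset Strict Implicit. Unset Printing Implicit Defensive.
Import Order.TTheory GRing.Theory Num.Theory.
Local Open Scope ring_scope.

Notation RR := Rdefinitions.R.

Definition vprec (t : nat) (x y : 'rV[RR]_t) : bool :=
  [forall i : 'I_t, x ord0 i < y ord0 i].

Definition qvert (t : nat) := ('rV[RR]_t * 'rV[RR]_t)%type.

Definition qc_adj (t : nat) (u v : qvert t) : bool :=
  (u != v) && (vprec u.1 v.2 || vprec v.1 u.2).

(* the graph is given by its (finite) vertex set V, a duplicate-free list;
   S is a clique / independent set: a duplicate-free list of vertices of V,
   pairwise adjacent / pairwise non-adjacent *)
Definition is_clique (t : nat) (V S : seq (qvert t)) : Prop :=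
  [/\ uniq S, {subset S <= V} &
      forall u v, u \in S -> v \in S -> u != v -> qc_adj u v].

Definition is_indep (t : nat) (V S : seq (qvert t)) : Prop :=
  [/\ uniq S, {subset S <= V} &
      forall u v, u \in S -> v \in S -> u != v -> ~~ qc_adj u v].

From HB Require Import structures.
From mathcomp Require Import all_boot all_order all_algebra.
From mathcomp Require Import all_classical all_reals all_analysis.
From mathcomp Require Import Rstruct Rstruct_topology.
From mathcomp Require Import zify.
Set Implicit Arguments. Unset Strict Implicit. Unset Printing Implicit Defensive.
Import Order.TTheory GRing.Theory Num.Theory.

(* Fix a coordinate i and replace the 2n values x(i), y(i) by their ranks.  A
   vertex with x(i) < y(i) gets as class the least l such that both ranks lie in
   the same dyadic block of length 2^l; the other vertices get class 0.  Inside
   one class the relation x(i) < y'(i) compares blocks, hence is transitive.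
   With O(log n) classes per coordinate, some n / O(log n)^t vertices agree in
   every coordinate; there x ≺ y' is a transitive relation, so the graph they
   induce is a comparability graph and Mirsky's theorem gives a clique C and an
   independent set A with |C| |A| >= n / O(log n)^t.  As (log n)^(2t) = O_t(n),
   one of them has at least (n / K_t)^(1/4) elements. *)

Lemma count_lt_sub_in (T : eqType) (a b : pred T) (s : seq T) x :
  {in s, subpred a b} -> x \in s -> b x -> ~~ a x -> count a s < count b s.
Proof.
move=> sab xs bx nax.
have <- : count a [seq y <- s | b y] = count a s.
  rewrite count_filter; apply: eq_in_count => y ys /=.
  by case: (boolP (a y)) => // /(sab y ys).
rewrite -[count b s]size_filter -(count_predC a [seq y <- s | b y]).
rewrite -addn1 leq_add2l -has_count.
by apply/hasP; exists x; rewrite ?mem_filter ?bx.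
Qed.

Lemma pairwise_total_in (T : eqType) (r : rel T) (s : seq T) :
  pairwise r s -> {in s &, forall x y, x != y -> r x y || r y x}.
Proof.
elim: s => //= z s IH /andP[/allP rz /IH{}IH] x y.
rewrite !inE => /predU1P[-> | xs] /predU1P[-> | ys]; rewrite ?eqxx //.
- by rewrite rz.
- by rewrite rz ?orbT.
- exact: IH.
Qed.

Section Mirsky.
Variables (T : eqType) (P : rel T) (X : seq T).
Hypothesis P_trans : {in X & &, transitive P}.
Hypothesis P_irr : {in X, irreflexive P}.

Definition minimal (Y : seq T) (x : T) := ~~ has (P^~ x) Y.

Lemma exists_minimal_below (Y : seq T) y : {subset Y <= X} ->
  y \in Y -> ~~ minimal Y y -> exists2 m, m \in Y & minimal Y m && P m y.
Proof.
move=> sYX; move: {2}_.+1 (ltnSn (count (P^~ y) Y)) => n.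
elim: n y => // n IH y lt_yn yY; rewrite negbK => /hasP[z zY Pzy].
have [min_z | nmin_z] := boolP (minimal Y z); first by exists z; rewrite ?min_z.
have lt_zy : count (P^~ z) Y < count (P^~ y) Y.
  apply: (count_lt_sub_in (x := z)) => // [w wY Pwz|].
    exact: (P_trans (sYX _ zY) (sYX _ wY) (sYX _ yY) Pwz Pzy).
  by rewrite /= P_irr ?sYX.
have [m mY /andP[min_m Pmz]] := IH z (leq_trans lt_zy lt_yn) zY nmin_z.
exists m; rewrite ?min_m //=.
exact: (P_trans (sYX _ zY) (sYX _ mY) (sYX _ yY) Pmz Pzy).
Qed.

Lemma mirsky (Y : seq T) : uniq Y -> {subset Y <= X} ->
  exists C A, [/\ sorted P C & {subset C <= Y}] /\
    [/\ uniq A, {subset A <= Y} & {in A &, forall x y, ~~ P x y}] /\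
    size Y <= size C * size A.
Proof.
move: {2}_.+1 (ltnSn (size Y)) => n.
elim: n Y => // n IH Y lt_Yn uY sYX.
case: Y => [|y Y'] in lt_Yn uY sYX *.
  by exists [::], [::].
set Y := y :: Y' in lt_Yn uY sYX *.
set M := [seq x <- Y | minimal Y x]; set N := [seq x <- Y | ~~ minimal Y x].
have sizeY : size Y = size M + size N by rewrite !size_filter count_predC.
have sNY : {subset N <= Y} by move=> z; rewrite mem_filter => /andP[].
have [m0 m0Y min_m0] : exists2 m0, m0 \in Y & minimal Y m0.
  have [min_y | nmin_y] := boolP (minimal Y y); first by exists y; rewrite ?mem_head.
  have [m mY /andP[min_m _]] := exists_minimal_below sYX (mem_head _ _) nmin_y.
  by exists m.
have M_gt0 : 0 < size M by rewrite size_filter -has_count; apply/hasP; exists m0.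
have [C' [A' [[sC' sC'N] [[uA' sA'N antiA'] leN]]]] :
    exists C A, [/\ sorted P C & {subset C <= N}] /\
    [/\ uniq A, {subset A <= N} & {in A &, forall x y, ~~ P x y}] /\
    size N <= size C * size A.
  apply: IH; first by lia.
  - exact: filter_uniq.
  - by move=> z /sNY /sYX.
have [m mM Pm] : exists2 m, m \in M & path P m C'.
  case: C' sC' sC'N {leN} => [|c C''] sC' sC'N.
    by exists m0; rewrite // mem_filter min_m0.
  have := sC'N c (mem_head _ _); rewrite mem_filter => /andP[/= nmin_c cY].
  have [m mY /andP[min_m Pmc]] := exists_minimal_below sYX cY nmin_c.
  by exists m; rewrite ?mem_filter ?min_m //= Pmc.
have antiM : {in M &, forall x y, ~~ P x y}.
  move=> x z; rewrite !mem_filter => /andP[_ xY] /andP[min_z _].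
  by apply: contra min_z => Pxz; apply/hasP; exists x.
exists (m :: C'), (if size A' <= size M then M else A'); do !split => //.
- move=> z; rewrite inE => /predU1P[-> | /sC'N/sNY //].
  by rewrite mem_filter in mM; case/andP: mM.
- by case: ifP => _ //; exact: filter_uniq.
- by case: ifP => _ z; [rewrite mem_filter => /andP[] | move/sA'N/sNY].
- by case: ifP.
- rewrite sizeY [size (m :: C')]/= mulSn; case: ifP => [le_A'M | /negbT]; last first.
    by rewrite -ltnNge => lt_MA'; rewrite leq_add // ltnW.
  by rewrite leq_add2l (leq_trans leN) // leq_mul2l le_A'M orbT.
Qed.

End Mirsky.

Lemma comparability_ramsey (T : eqType) (D : rel T) (Y : seq T) :
  uniq Y -> {in Y & &, transitive D} ->
  exists C A,
    [/\ uniq C, {subset C <= Y} & {in C &, forall x y, x != y -> D x y || D y x}] /\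
    [/\ uniq A, {subset A <= Y} & {in A &, forall x y, x != y -> ~~ D x y}] /\
    size Y <= size C * size A.
Proof.
move=> uY D_trans.
(* ties [D x y && D y x] are broken by the position in [Y] *)
pose P x y := D x y && (D y x ==> (index x Y < index y Y)).
have P_trans : {in Y & &, transitive P}.
  move=> y x z yY xY zY /andP[Dxy ixy] /andP[Dyz iyz].
  rewrite /P (D_trans _ _ _ yY xY zY Dxy Dyz); apply/implyP => Dzx.
  have Dyx := D_trans _ _ _ zY yY xY Dyz Dzx.
  have Dzy := D_trans _ _ _ xY zY yY Dzx Dxy.
  by rewrite (ltn_trans (implyP ixy Dyx) (implyP iyz Dzy)).
have P_irr : {in Y, irreflexive P} by move=> x _; rewrite /P ltnn implybF andbN.
have [C [A [[sC sCY] [[uA sAY antiA] leYCA]]]] := mirsky P_trans P_irr uY (fun x xY => xY).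
have C_trans : {in C & &, transitive P} := sub_in3 sCY P_trans.
exists C, A; split; last split => //.
- split=> // [|x y xC yC nxy].
    by apply: sorted_uniq_in sC => // x /sCY /P_irr.
  have /pairwise_total_in/(_ x y xC yC nxy) : pairwise P C.
    by rewrite -(sorted_pairwise_in C_trans) ?sC //; apply/allP.
  by case/orP => /andP[-> _]; rewrite ?orbT.
- split=> // x y xA yA; apply: contra => Dxy.
  have := antiA x y xA yA; have := antiA y x yA xA.
  rewrite /P Dxy /=; case: (D y x) => //=; rewrite -!leqNgt => le_yx le_xy.
  apply/eqP; rewrite -(nth_index x (sAY _ xA)) -(nth_index x (sAY _ yA)).
  by congr nth; apply/eqP; rewrite eqn_leq le_xy le_yx.
Qed.

Lemma dyadic_level_subproof A B : exists l, A %/ 2 ^ l == B %/ 2 ^ l.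
Proof.
exists (A + B); rewrite !divn_small //.
- by rewrite (leq_trans (ltn_expl B (isT : 1 < 2))) // leq_exp2l // leq_addl.
- by rewrite (leq_trans (ltn_expl A (isT : 1 < 2))) // leq_exp2l // leq_addr.
Qed.

Definition dyadic_level A B := ex_minn (dyadic_level_subproof A B).

Lemma dyadic_level_eq A B : A %/ 2 ^ dyadic_level A B = B %/ 2 ^ dyadic_level A B.
Proof. by rewrite /dyadic_level; case: ex_minnP => l /eqP. Qed.

Lemma dyadic_level_min A B l : A %/ 2 ^ l = B %/ 2 ^ l -> dyadic_level A B <= l.
Proof. by rewrite /dyadic_level; case: ex_minnP => l' _ min_l' /eqP/min_l'. Qed.

Lemma dyadic_level_leq A B L : A < 2 ^ L -> B < 2 ^ L -> dyadic_level A B <= L.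
Proof. by move=> AL BL; apply: dyadic_level_min; rewrite !divn_small. Qed.

Lemma dyadic_level_gt0 A B : A != B -> 0 < dyadic_level A B.
Proof.
apply: contraNT; rewrite -eqn0Ngt => /eqP l0.
by have := dyadic_level_eq A B; rewrite l0 !divn1 => ->.
Qed.

Lemma dyadic_level_split A B : A < B ->
  let l := dyadic_level A B in
  A %/ 2 ^ l.-1 = (A %/ 2 ^ l).*2 /\ B %/ 2 ^ l.-1 = (A %/ 2 ^ l).*2.+1.
Proof.
move=> lt_AB l; have := dyadic_level_gt0 (negbT (ltn_eqF lt_AB)).
have eqAB := dyadic_level_eq A B; have minl := @dyadic_level_min A B.
rewrite -/l in eqAB minl *; case: l eqAB minl => // k eqAB minl _ /=.
rewrite expnSr !divnMA in eqAB *.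
have neqAB : A %/ 2 ^ k != B %/ 2 ^ k by apply/eqP => /minl; rewrite ltnn.
have : A %/ 2 ^ k <= B %/ 2 ^ k by apply: leq_div2r; apply: ltnW.
move: eqAB neqAB; rewrite -!muln2; lia.
Qed.

(* At level l > 0 the ranks straddle the midpoint of their common block of
   length 2^l, so [A1 < B2] iff the block of [A1] does not come after that of [A2]. *)
Lemma dyadic_level_ltE A1 B1 A2 B2 : A1 < B1 -> A2 < B2 ->
  dyadic_level A1 B1 = dyadic_level A2 B2 ->
  (A1 < B2) = (A1 %/ 2 ^ dyadic_level A1 B1 <= A2 %/ 2 ^ dyadic_level A2 B2).
Proof.
move=> lt1 lt2 eql; have [eqA1 _] := dyadic_level_split lt1.
have [_ eqB2] := dyadic_level_split lt2; rewrite -eql in eqB2 *.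
set d := 2 ^ (dyadic_level A1 B1).-1 in eqA1 eqB2.
apply/idP/idP => [lt_AB | le_q].
  have : A1 %/ d <= B2 %/ d by apply: leq_div2r; apply: ltnW.
  by rewrite eqA1 eqB2 -!muln2; lia.
rewrite ltnNge; apply: contraL le_q => /(leq_div2r d).
by rewrite eqA1 eqB2 -!muln2; lia.
Qed.

Section Rank.
Context {disp : Order.disp_t} {T : orderType disp}.
Implicit Types (s : seq T) (x y : T).

Definition rank s x := count (< x)%O s.

Lemma rank_le s x y : (x <= y)%O -> rank s x <= rank s y.
Proof. by move=> le_xy; apply: sub_count => z /= /lt_le_trans; apply. Qed.

Lemma rank_ltE s x y : x \in s -> (x < y)%O = (rank s x < rank s y).
Proof.
move=> xs; apply/idP/idP => [lt_xy | ].
  apply: (@leq_trans (count (<= x)%O s)); first by rewrite count_lt_le_mem.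
  by apply: sub_count => z /= /le_lt_trans; apply.
by apply: contraLR; rewrite -!leNgt -leqNgt; apply: rank_le.
Qed.

Lemma rank_lt_size s x : x \in s -> rank s x < size s.
Proof. by move=> xs; rewrite (leq_trans _ (count_size (<= x)%O s)) ?count_lt_le_mem. Qed.

End Rank.

Section IntervalClass.
Context {disp : Order.disp_t} {T : orderType disp}.
Variable E : seq (T * T).
Implicit Types (p q r : T * T).

Definition endpoints := unzip1 E ++ unzip2 E.

Definition iclass p : nat :=
  if (p.1 < p.2)%O then dyadic_level (rank endpoints p.1) (rank endpoints p.2) else 0.

Definition iblock p : nat := rank endpoints p.1 %/ 2 ^ iclass p.

Lemma mem_endpoints1 p : p \in E -> p.1 \in endpoints.
Proof. by move=> pE; rewrite mem_cat map_f. Qed.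

Lemma mem_endpoints2 p : p \in E -> p.2 \in endpoints.
Proof. by move=> pE; rewrite mem_cat map_f ?orbT. Qed.

Lemma iclass_lt p : p \in E -> iclass p < (trunc_log 2 (size E)).+3.
Proof.
move=> pE; rewrite /iclass; case: ifP => // _; rewrite ltnS.
have lt_E : size endpoints < 2 ^ (trunc_log 2 (size E)).+2.
  have := trunc_log_ltn (size E) (isT : 1 < 2).
  by rewrite /endpoints size_cat !size_map !expnS; lia.
by apply: dyadic_level_leq; apply: ltn_trans lt_E;
  rewrite rank_lt_size ?mem_endpoints1 ?mem_endpoints2.
Qed.

Lemma iclass_gt0 p : p \in E -> (0 < iclass p) = (p.1 < p.2)%O.
Proof.
move=> pE; rewrite /iclass; case: ifPn => // lt_p.
by apply: dyadic_level_gt0; rewrite neq_ltn -rank_ltE ?lt_p ?mem_endpoints1.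
Qed.

Lemma iclass_ltE p q : p \in E -> q \in E -> 0 < iclass p -> iclass p = iclass q ->
  (p.1 < q.2)%O = (iblock p <= iblock q).
Proof.
move=> pE qE p_gt0 epq; have q_gt0 : 0 < iclass q by rewrite -epq.
rewrite iclass_gt0 // in p_gt0; rewrite iclass_gt0 // in q_gt0.
move: epq; rewrite /iblock /iclass p_gt0 q_gt0 (rank_ltE _ (mem_endpoints1 pE)).
by apply: dyadic_level_ltE; rewrite -rank_ltE ?mem_endpoints1.
Qed.

Lemma iclass_trans : {in E & &, forall p q r, iclass p = iclass q ->
  iclass q = iclass r -> (p.1 < q.2)%O -> (q.1 < r.2)%O -> (p.1 < r.2)%O}.
Proof.
move=> p q r pE qE rE epq eqr lt_pq lt_qr.
have [q0 | q_gt0] := posnP (iclass q).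
  have le_q : (q.2 <= q.1)%O by rewrite leNgt -iclass_gt0 // q0.
  exact: lt_trans (lt_le_trans lt_pq le_q) lt_qr.
have p_gt0 : 0 < iclass p by rewrite epq.
rewrite (iclass_ltE pE qE) // in lt_pq; rewrite (iclass_ltE qE rE) // in lt_qr.
by rewrite (iclass_ltE pE rE) ?epq // (leq_trans lt_pq lt_qr).
Qed.

End IntervalClass.

Lemma sum_count_eq_size (T : eqType) (f : T -> nat) k (X : seq T) :
  {in X, forall x, f x < k} -> \sum_(j < k) count (fun x => f x == j) X = size X.
Proof.
elim: X => [|x X IH] fk /=; first by rewrite big1.
rewrite big_split /= IH => [|y yX]; last by rewrite fk // inE yX orbT.
rewrite (bigD1 (Ordinal (fk x (mem_head _ _)))) //= eqxx big1 // => j.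
by rewrite -val_eqE eq_sym => /negbTE ->.
Qed.

Lemma pigeonhole (T : eqType) (f : T -> nat) k (X : seq T) :
  {in X, forall x, f x < k} -> exists j, size X <= k * count (fun x => f x == j) X.
Proof.
case: k => [|k] fk.
  by case: X fk => [|x X] fk; [exists 0 | have := fk x (mem_head _ _)].
have [|j eq_max] := bigop.eq_bigmax (fun j : 'I_k.+1 => count (fun x => f x == j) X).
  by rewrite card_ord.
exists (nat_of_ord j); rewrite -eq_max -(sum_count_eq_size fk).
rewrite -[n in n * _]card_ord -sum_nat_const.
by apply: leq_sum => i _; apply: leq_bigmax.
Qed.

Lemma pigeonhole_family (I T : eqType) (f : I -> T -> nat) k (J : seq I) (X : seq T) :
  (forall i, {in X, forall x, f i x < k}) ->
  exists Y, [/\ subseq Y X, size X <= k ^ size J * size Y &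
    forall i, i \in J -> {in Y &, forall x y, f i x = f i y}].
Proof.
move=> fk; elim: J => [|i J [Y [sYX leXY constY]]].
  by exists X; rewrite subseq_refl expn0 mul1n.
have [j le_Yj] := pigeonhole (fun x xY => fk i x (mem_subseq sYX xY)).
exists [seq x <- Y | f i x == j]; split.
- exact: subseq_trans (filter_subseq _ _) sYX.
- by rewrite /= expnS -mulnA size_filter mulnCA (leq_trans leXY) // leq_mul2l le_Yj orbT.
- move=> i'; rewrite inE => /predU1P[-> | i'J] x y; rewrite !mem_filter.
    by move=> /andP[/eqP-> _] /andP[/eqP-> _].
  by move=> /andP[_ xY] /andP[_ yY]; apply: constY.
Qed.

Lemma leq_bin_exp2 n k : 'C(n, k) <= 2 ^ n.
Proof.
elim: n k => [|n IHn] [|k] //; first by rewrite bin0 expn_gt0.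
by rewrite binS expnS mul2n -addnn leq_add.
Qed.

Lemma expn_leq_ffact a r : a.+1 ^ r <= (a + r) ^_ r.
Proof.
elim: r => [|r IHr]; first by rewrite expn0 ffactn0.
by rewrite addnS ffactSS expnS leq_mul // ltnS leq_addr.
Qed.

Lemma trunc_log_expn_leq n r : 0 < n -> (trunc_log 2 n).+3 ^ r <= r`! * 2 ^ (r + 2) * n.
Proof.
move=> n_gt0; apply: (leq_trans (expn_leq_ffact _ r)).
rewrite -bin_ffact mulnC -mulnA leq_mul // (leq_trans (leq_bin_exp2 _ r)) //.
have -> : (trunc_log 2 n).+2 + r = (r + 2) + trunc_log 2 n by lia.
by rewrite expnD leq_mul2l trunc_logP ?orbT.
Qed.

Lemma leq_sqr_elim n a b K : n <= a * b -> a * a <= K * n -> n <= K * (b * b).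
Proof. nia. Qed.

Lemma polylog_sqr_bound n m t : 0 < n -> n <= (trunc_log 2 n).+3 ^ t * m ^ 2 ->
  n <= (2 * t)`! * 2 ^ (2 * t + 2) * m ^ 4.
Proof.
move=> n_gt0 le_nm.
have le_log : (trunc_log 2 n).+3 ^ t * (trunc_log 2 n).+3 ^ t <=
              (2 * t)`! * 2 ^ (2 * t + 2) * n.
  by rewrite -expnD addnn -mul2n trunc_log_expn_leq.
by have := leq_sqr_elim le_nm le_log; rewrite -expnD.
Qed.

Lemma transitive_clique_or_indep t (V Y : seq (qvert t)) : uniq Y -> {subset Y <= V} ->
  {in Y & &, transitive (fun u v : qvert t => vprec u.1 v.2)} ->
  exists S, (is_clique V S \/ is_indep V S) /\ size Y <= size S ^ 2.
Proof.
move=> uY sYV prec_trans.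
have [C [A [[uC sCY cliqueC] [[uA sAY indepA] leYCA]]]] :=
  comparability_ramsey uY prec_trans.
have le_Y S : size C <= size S -> size A <= size S -> size Y <= size S ^ 2.
  by move=> leC leA; rewrite (leq_trans leYCA) // -mulnn leq_mul.
case: (leqP (size C) (size A)) => [le_CA | /ltnW le_AC].
  exists A; split; last exact: le_Y.
  right; split=> // [u /sAY/sYV // | u v uS vS nuv].
  by rewrite /qc_adj nuv negb_or !indepA // eq_sym.
exists C; split; last exact: le_Y.
by left; split=> // [u /sCY/sYV // | u v uS vS nuv]; rewrite /qc_adj nuv cliqueC.
Qed.

Local Open Scope ring_scope.

Definition coord_pair t (i : 'I_t) (u : qvert t) : RR * RR := (u.1 ord0 i, u.2 ord0 i).

Definition vclass t (V : seq (qvert t)) (i : 'I_t) (u : qvert t) : nat :=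
  iclass (map (coord_pair i) V) (coord_pair i u).

Lemma vclass_lt t (V : seq (qvert t)) i u :
  u \in V -> (vclass V i u < (trunc_log 2 (size V)).+3)%N.
Proof. by move=> uV; rewrite /vclass -(size_map (coord_pair i)) iclass_lt ?map_f. Qed.

Lemma vprec_trans_same_class t (V Y : seq (qvert t)) : {subset Y <= V} ->
  (forall i, {in Y &, forall u v, vclass V i u = vclass V i v}) ->
  {in Y & &, transitive (fun u v : qvert t => vprec u.1 v.2)}.
Proof.
move=> sYV constY v u w vY uY wY /forallP lt_uv /forallP lt_vw; apply/forallP => i.
have mem_pair z : z \in Y -> coord_pair i z \in map (coord_pair i) V.
  by move/sYV; apply: map_f.
exact: (iclass_trans (mem_pair _ uY) (mem_pair _ vY) (mem_pair _ wY)
  (constY i _ _ uY vY) (constY i _ _ vY wY) (lt_uv i) (lt_vw i)).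
Qed.

Lemma powR_invn_le (R : realType) (x y : R) n : (0 < n)%N -> 0 <= x -> 0 <= y ->
  x <= y ^+ n -> x `^ n%:R^-1 <= y.
Proof.
move=> n_gt0 x0 y0 le_xy.
apply: le_trans (ge0_ler_powR _ _ _ le_xy) _; rewrite ?invr_ge0 ?nnegrE ?exprn_ge0 //.
by rewrite -powR_mulrn // -powRrM mulfV ?powRr1 // pnatr_eq0 -lt0n.
Qed.

Theorem theorem4p1 :
  exists c : RR, 0 < c /\
  forall t : nat, (0 < t)%N ->
  exists alpha : RR, 0 < alpha /\
  forall V : seq (qvert t), uniq V ->
  exists S : seq (qvert t),
    (is_clique V S \/ is_indep V S) /\
    alpha * ((size V)%:R `^ c) <= (size S)%:R.
Proof.
exists 4^-1; split => [|t _]; first by rewrite invr_gt0.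
pose K := ((2 * t)`! * 2 ^ (2 * t + 2))%N.
have K_gt0 : (0 < K)%N by rewrite muln_gt0 fact_gt0 expn_gt0.
exists K%:R^-1; split => [|V uV]; first by rewrite invr_gt0 ltr0n.
set n := size V; have [n0 | n_gt0] := posnP n.
  by exists [::]; split; [left | rewrite n0 powR0 ?mulr0 // invr_eq0].
have [Y [sYV leVY constY]] := pigeonhole_family (enum 'I_t) (fun i => @vclass_lt t V i).
rewrite size_enum_ord in leVY.
have [S [HS leYS]] := transitive_clique_or_indep (subseq_uniq sYV uV) (mem_subseq sYV)
  (vprec_trans_same_class (mem_subseq sYV) (fun i => constY i (mem_enum _ i))).
exists S; split => //.
have le_nS := polylog_sqr_bound n_gt0 (leq_trans leVY (leq_mul (leqnn _) leYS)).
have le_nKS : n%:R `^ 4^-1 <= (K * size S)%:R :> RR.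
  apply: powR_invn_le => //; rewrite -natrX ler_nat expnMn (leq_trans le_nS) //.
  by rewrite leq_mul2r [(K ^ 4)%N]expnS leq_pmulr ?expn_gt0 ?K_gt0 ?orbT.
by rewrite mulrC ler_pdivrMr ?ltr0n // -natrM mulnC.
Qed.
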